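(* Let $F\subsetneq K$ be fields of characteristic $0$, with $F$ a proper nonempty subfield of $K$. Let $p(x)=\sum_{k=0}^{n}a_k x^k\in K[x]$ with $a_n\neq 0$, and $q(x)=\sum_{j=0}^{m}b_j x^j\in K[x]$ with $b_m\neq 0$ and $b_0,b_m\in F$. Suppose $p\circ q\in F[x]$. Then $p\in F[x]$ or $q\in F[x]$. Moreover, if $p\circ q$ is not constant, then $p\in F[x]$ and $q\in F[x]$.
   Context: $F[x]$ denotes the set of polynomials with all coefficients in $F$. *)

From HB Require Import structures.
From mathcomp Require Import all_boot all_order all_algebra.

From HB Require Import structures.
From mathcomp Require Import all_boot all_order all_algebra.
From mathcomp Require Import ring zify.
Import GRing.Theory.
Local Open Scope ring_scope.

(* Let n = deg p > 0 and m = deg q > 0. If q is not over F, take the largest j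
   with q_j outside F; as q_0 and q_m lie in F, 0 < j < m. Split q = s + t with
   s in F[x] the part of degree > j and deg t = j. Since j > 0, only the leading
   term a_n q^n of p o q reaches degree (n-1)m + j, where (s + t)^n has
   coefficient (s^n)_((n-1)m+j) + n b_m^(n-1) q_j. As a_n = lc(p o q) / b_m^n
   lies in F and n != 0 in K, this forces q_j in F. Once q is known to be over
   F, the same top-down argument on the leading coefficients of the truncations
   of p shows that p is over F. If p o q is constant, p or q is constant. *)

Lemma coefM_top (R : nzSemiRingType) (s t : {poly R}) (a b : nat) :
  (size s <= a.+1)%N -> (size t <= b.+1)%N -> (s * t)`_(a + b) = s`_a * t`_b.
Proof.
move=> ss st; rewrite coefM (bigD1 (Ordinal (leq_addr b a.+1))) //= addKn big1 ?addr0 //.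
move=> [k /= lt_k]; rewrite -val_eqE /= => ne_k.
have [lt_ka|lt_ak] : (k < a \/ a < k)%N by lia.
- by rewrite [t`__]nth_default ?mulr0 //; apply: leq_trans st _; lia.
- by rewrite [s`__]nth_default ?mul0r //; apply: leq_trans ss _.
Qed.

Lemma size_exp_mul_leq {R : comNzRingType} {s t : {poly R}} {m j : nat} (a b : nat) :
  (size s <= m.+1)%N -> (size t <= j.+1)%N ->
  (size (s ^+ a * t ^+ b)%R <= (a * m + b * j).+1)%N.
Proof.
move=> ss st; apply: leq_trans (size_polyMleq _ _) _.
have := size_poly_exp_leq s a; have := size_poly_exp_leq t b.
have : ((size s).-1 * a <= m * a)%N by rewrite leq_mul2r; lia.
have : ((size t).-1 * b <= j * b)%N by rewrite leq_mul2r; lia.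
lia.
Qed.

Section LowCoefficient.
Context {R : idomainType} {s t : {poly R}} {m j : nat}.
Hypotheses (size_s : size s = m.+1) (size_t : (size t <= j.+1)%N) (lt_jm : (j < m)%N).

Lemma coef_exprD_low (n : nat) :
  ((s + t) ^+ n.+1)`_(n * m + j) =
  (s ^+ n.+1)`_(n * m + j) + (lead_coef s ^+ n * t`_j) *+ n.+1.
Proof.
rewrite exprDn big_ord_recl big_ord_recl !coefD coef_sum big1 ?addr0; last first.
  move=> i _; rewrite coefMn nth_default ?mul0rn // !lift0.
  apply: leq_trans (size_exp_mul_leq (n.+1 - i.+2) i.+2 (eq_leq size_s) size_t) _.
  by have := ltn_ord i; nia.
rewrite !lift0 /= subn0 bin0 subSS subn0 bin1 expr0 mulr1 expr1.
rewrite mulr1n coefMn; congr (_ + _ *+ _); rewrite coefM_top //; last first.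
  by apply: leq_trans (size_poly_exp_leq _ _) _; rewrite size_s mulnC.
by rewrite -lead_coef_exp lead_coefE size_exp size_s mulnC.
Qed.

Lemma coef_comp_poly_low (p : {poly R}) (n : nat) : size p = n.+2 -> (0 < j)%N ->
  (p \Po (s + t))`_(n * m + j) =
  lead_coef p * ((s ^+ n.+1)`_(n * m + j) + (lead_coef s ^+ n * t`_j) *+ n.+1).
Proof.
move=> size_p j_gt0; rewrite comp_polyE size_p big_ord_recr coefD coef_sum big1 /=.
  by rewrite add0r coefZ coef_exprD_low (lead_coefE p) size_p.
move=> i _; rewrite coefZ [X in _ * X]nth_default ?mulr0 //.
have size_st : (size (s + t)%R <= m.+1)%N.
  apply: leq_trans (size_polyD _ _) _.
  by rewrite geq_max size_s leqnn (leq_trans size_t) // ltnW.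
apply: leq_trans (size_poly_exp_leq _ _) _.
have := ltn_ord i; move: size_st; nia.
Qed.

End LowCoefficient.

Lemma size_comp_poly_gt1 (R : idomainType) (p q : {poly R}) :
  (1 < size (p \Po q))%N = (1 < size p)%N && (1 < size q)%N.
Proof. by rewrite -!ltn_predRL size_comp_poly muln_gt0. Qed.

Lemma lead_coef_take_poly (R : nzSemiRingType) (p : {poly R}) (j : nat) :
  p`_j != 0 -> lead_coef (take_poly j.+1 p) = p`_j.
Proof. by move=> pj_nz; rewrite lead_coefE size_poly_eq // coef_poly ltnSn. Qed.

Section CompPolyOver.
Context {K : fieldType} {F : divringClosed K}.

Lemma not_polyOver_last_coef {p : {poly K}} : p \isn't a polyOver F ->
  exists2 j, p`_j \notin F & p - take_poly j.+1 p \is a polyOver F.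
Proof.
move=> pNF; have [i piF|allF] := pickP (fun i : 'I_(size p) => p`_i \notin F); last first.
  case/negP: pNF; apply/polyOverP => i; have [lt_ip|le_pi] := ltnP i (size p).
    by have /negbFE := allF (Ordinal lt_ip).
  by rewrite nth_default ?rpred0.
have le_size k : p`_k \notin F -> (k <= (size p).-1)%N.
  move=> pkF; suff lt_kp : (k < size p)%N by rewrite -ltnS (ltn_predK lt_kp).
  by rewrite ltnNge; apply: contra pkF => /(nth_default 0) ->; rewrite rpred0.
have exP : exists k, p`_k \notin F by exists i.
have [j pjF max_j] := ex_maxnP exP le_size.
exists j => //; apply/polyOverP => k; rewrite coefB coef_take_poly.
case: ltnP => [_|lt_jk]; first by rewrite subrr rpred0.
by rewrite subr0; apply: contraT => /max_j; rewrite leqNgt lt_jk.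
Qed.

Lemma polyOver_lead_coef_comp {p q : {poly K}} :
  (1 < size q)%N -> lead_coef q \in F -> p \Po q \is a polyOver F ->
  lead_coef p \in F.
Proof.
move=> q_gt1 qlcF /polyOverP/(_ (size (p \Po q)).-1).
have lcq_nz : lead_coef q != 0 by rewrite lead_coef_eq0 -size_poly_gt0 ltnW.
rewrite -lead_coefE lead_coef_comp // => pqlcF.
by rewrite -(mulfK (expf_neq0 (size p).-1 lcq_nz) (lead_coef p)) rpred_div ?rpredX.
Qed.

Lemma polyOver_comp_outer {p q : {poly K}} :
  q \is a polyOver F -> (1 < size q)%N -> p \Po q \is a polyOver F ->
  p \is a polyOver F.
Proof.
move=> qF q_gt1 pqF; apply: contraT => /not_polyOver_last_coef[j pjF highF].
have pj_nz : p`_j != 0 by apply: contraNneq pjF => ->; rewrite rpred0.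
have lowF : take_poly j.+1 p \Po q \is a polyOver F.
  by rewrite -[take_poly _ _](subKr p) comp_polyB rpredB //; apply: polyOver_comp.
have := polyOver_lead_coef_comp q_gt1 (polyOverP qF _) lowF.
by rewrite lead_coef_take_poly ?(negbTE pjF).
Qed.

Lemma polyOver_comp_inner {p q : {poly K}} : [pchar K] =i pred0 ->
  (1 < size p)%N -> q`_0 \in F -> lead_coef q \in F ->
  p \Po q \is a polyOver F -> q \is a polyOver F.
Proof.
move=> charK0 p_gt1 q0F qlcF pqF; apply: contraT => /not_polyOver_last_coef[j qjF highF].
set t := take_poly j.+1 q; set s := q - t.
have qj_nz : q`_j != 0 by apply: contraNneq qjF => ->; rewrite rpred0.
have j_gt0 : (0 < j)%N by rewrite lt0n; apply: contraNneq qjF => ->.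
have lt_jq : (j.+1 < size q)%N.
  have : (j < size q)%N by rewrite ltnNge; apply: contra qj_nz => /(nth_default 0) ->.
  have : j != (size q).-1 by apply: contraNneq qjF => ->.
  lia.
have lt_tq : (size (- t) < size q)%N by rewrite size_polyN (leq_ltn_trans (size_take_poly _ _)).
set n := (size p).-2; set m := (size q).-1.
have size_p : size p = n.+2 by rewrite /n; lia.
have size_s : size s = m.+1 by rewrite size_polyDl // /m; lia.
have lt_jm : (j < m)%N by rewrite /m; lia.
have := coef_comp_poly_low size_s (size_take_poly j.+1 q) lt_jm p n size_p j_gt0.
rewrite [s + t]subrK lead_coefDl // coef_take_poly ltnSn => coef_pq.
have lcq_nz : lead_coef q != 0 by rewrite lead_coef_eq0 -size_poly_gt0; lia.
have lcp_nz : lead_coef p != 0 by rewrite lead_coef_eq0 -size_poly_gt0 size_p.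
have n1_nz : n.+1%:R != 0 :> K by rewrite (pcharf0P K).1.
have def_qj : q`_j = ((p \Po q)`_(n * m + j) / lead_coef p - (s ^+ n.+1)`_(n * m + j))
                 / (lead_coef q ^+ n * n.+1%:R).
  by rewrite coef_pq; field; rewrite [1 + _]addrC natr1 n1_nz expf_neq0.
have lcpF : lead_coef p \in F by apply: polyOver_lead_coef_comp pqF; lia.
case/negP: qjF; rewrite def_qj rpred_div ?rpredB ?rpredM ?rpredV ?rpredX ?rpred_nat //.
  exact: polyOverP pqF _.
exact: polyOverP (rpredX _ highF) _.
Qed.

End CompPolyOver.

Theorem theorem13 (K : fieldType) (F : divringClosed K)
  (charK0 : [pchar K] =i pred0)
  (Fproper : exists x : K, x \notin F)
  (p q : {poly K})
  (p_nz : p != 0) (q_nz : q != 0)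
  (q0F : q`_0 \in F) (qlcF : lead_coef q \in F)
  (pqF : (p \Po q) \is a polyOver F) :
  (p \is a polyOver F \/ q \is a polyOver F) /\
  ((1 < size (p \Po q))%N -> p \is a polyOver F /\ q \is a polyOver F).
Proof.
have nonconst : (1 < size (p \Po q))%N -> p \is a polyOver F /\ q \is a polyOver F.
  rewrite size_comp_poly_gt1 => /andP[p_gt1 q_gt1].
  have qF := polyOver_comp_inner charK0 p_gt1 q0F qlcF pqF.
  by split=> //; apply: polyOver_comp_outer qF q_gt1 pqF.
split=> //; case: (ltnP 1 (size (p \Po q))) => [/nonconst[]|]; first by left.
rewrite leqNgt size_comp_poly_gt1 negb_and -!leqNgt => /orP[/size1_polyC pC|/size1_polyC ->].
  by left; move: pqF; rewrite pC comp_polyC !polyOverC.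
by right; rewrite polyOverC.
Qed.
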